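(* Let $S\subseteq\mathbb{N}^d$ be a Frobenius GNS with Frobenius gap $F(S)$. Then $$\frac{g(S)}{\|F(S)\|-g(S)}\le t(S).$$
   Context: $\mathbb{N}=\{0,1,2,\dots\}$. A GNS is a submonoid $S\subseteq\mathbb{N}^d$ with finite complement $\mathcal{H}(S)=\mathbb{N}^d\setminus S$ (gaps); $g(S)=|\mathcal{H}(S)|$. A Frobenius GNS is a GNS such that $\mathcal{H}(S)$ has a unique maximal element $F(S)$ for the natural partial order ($x\le y$ iff $x^{(i)}\le y^{(i)}$ for all $i$). A gap $P$ is pseudo-Frobenius if $P+s\in S$ for all nonzero $s\in S$; $t(S)$ is the number of pseudo-Frobenius gaps. For $F\in\mathbb{N}^d$, $\|F\|=\prod_{i=1}^d(F^{(i)}+1)$. *)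

From mathcomp Require Import all_boot all_order all_algebra.
From mathcomp Require Import finmap.
From mathcomp Require Import boolp.
Set Implicit Arguments. Unset Strict Implicit. Unset Printing Implicit Defensive.
Local Open Scope fset_scope.

Definition vec (d : nat) := {ffun 'I_d -> nat}.

Definition vzero d : vec d := [ffun _ => 0%N].
Definition vadd d (x y : vec d) : vec d := [ffun i => (x i + y i)%N].

Definition vle d (x y : vec d) : bool := [forall i, (x i <= y i)%N].
Definition vlt d (x y : vec d) : bool := (x != y) && vle x y.

Definition submonoid d (S : pred (vec d)) : Prop :=
  S (vzero d) /\ forall x y, S x -> S y -> S (vadd x y).

Definition GNS_with_gaps d (S : pred (vec d)) (H : {fset vec d}) : Prop :=
  submonoid S /\ forall x, ~~ S x <-> x \in H.

Definition genus d (H : {fset vec d}) : nat := #|` H|.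

Definition maximal_in d (H : {fset vec d}) (x : vec d) : Prop :=
  x \in H /\ forall h, h \in H -> ~~ vlt x h.
Definition unique_maximal d (H : {fset vec d}) (F : vec d) : Prop :=
  maximal_in H F /\ forall x, maximal_in H x -> x = F.

Definition vnorm d (F : vec d) : nat := \prod_(i < d) (F i).+1.

Definition pseudo_frobenius d (S : pred (vec d)) (H : {fset vec d}) (P : vec d) : Prop :=
  P \in H /\ forall s, S s -> s != vzero d -> S (vadd P s).

Definition type_of d (S : pred (vec d)) (H : {fset vec d}) : nat :=
  #|` [fset P in H | `[< pseudo_frobenius S H P >]]|.

From mathcomp Require Import all_boot all_order all_algebra.
From mathcomp Require Import finmap.
From mathcomp Require Import boolp.
Import Order.TTheory GRing.Theory Num.Theory.
Set Implicit Arguments. Unset Strict Implicit. Unset Printing Implicit Defensive.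

(* 1. Every gap lies below F: upward induction over the finite gap set
      reaches a maximal gap, which must be F.  Hence the gaps form a subset
      of the box B = {x | x <= F}, which has exactly ||F|| elements, and
      the elements of S in B number ||F|| - g(S).
   2. Every gap x can be written x = P - s with P pseudo-Frobenius and
      s in S: if x is not pseudo-Frobenius some s <> 0 in S has x + s a gap,
      and we recurse on the larger gap x + s (again upward induction).
      Since s <= P <= F, the element s lies in S /\ B.
   3. So the gaps are contained in the image of PF(S) x (S /\ B) under
      subtraction, giving  g(S) <= t(S) * (||F|| - g(S)), which is the
      claim after dividing (the quotient is 0 when ||F|| = g(S)). *)

Local Open Scope fset_scope.

Lemma fset_upward_ind (T : choiceType) (lt : rel T) (A : {fset T})
    (P : T -> Prop) :
  (forall x y z, lt x y -> lt y z -> lt x z) -> (forall x, ~~ lt x x) ->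
  (forall x, x \in A -> (forall y, y \in A -> lt x y -> P y) -> P x) ->
  forall x, x \in A -> P x.
Proof.
move=> lt_trans lt_irr IH.
pose above x := #|` [fset y in A | lt x y]|.
have above_dec a b : b \in A -> lt a b -> (above b < above a)%N.
  move=> bA lab; apply: fproper_ltn_card; rewrite fproperE; apply/andP; split.
    by apply/fsubsetP => z; rewrite !inE /= => /andP[-> /(lt_trans _ _ _ lab)].
  by apply/fsubsetPn; exists b; rewrite !inE /= ?bA ?lab ?lt_irr.
suff ind n x : (above x <= n)%N -> x \in A -> P x by move=> x; apply: ind.
elim: n x => [|n IHn] x le_n xA; apply: IH => // y yA lxy.
  by have := leq_trans (above_dec _ _ yA lxy) le_n.
by apply: (IHn y _ yA); rewrite -ltnS (leq_trans (above_dec _ _ yA lxy)).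
Qed.

Lemma card_imfset2_le (T1 T2 T : choiceType) (f : T1 -> T2 -> T)
    (A : {fset T1}) (B : {fset T2}) :
  (#|` [fset f a b | a in A, b in B]| <= #|` A| * #|` B|)%N.
Proof.
by rewrite Imfset.imfset2E /= size_seq_fset (leq_trans (size_undup _))
  // size_allpairs.
Qed.

Section NaturalOrder.
Variable d : nat.
Implicit Types x y z s : vec d.

Lemma vle_refl x : vle x x. Proof. by apply/forallP. Qed.

Lemma vle_trans x y z : vle x y -> vle y z -> vle x z.
Proof.
move=> /forallP le_xy /forallP le_yz; apply/forallP => i.
exact: leq_trans (le_xy i) (le_yz i).
Qed.

Lemma vle_anti x y : vle x y -> vle y x -> x = y.
Proof.
move=> /forallP le_xy /forallP le_yx; apply/ffunP => i; apply/eqP.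
by rewrite eqn_leq le_xy le_yx.
Qed.

Lemma vlt_trans x y z : vlt x y -> vlt y z -> vlt x z.
Proof.
move=> /andP[ne_xy le_xy] /andP[ne_yz le_yz].
rewrite /vlt (vle_trans le_xy le_yz) andbT; apply: contraNneq ne_xy => exz.
by rewrite exz in le_xy *; rewrite (vle_anti le_yz le_xy).
Qed.

Lemma vlt_irr x : ~~ vlt x x. Proof. by rewrite /vlt eqxx. Qed.

Lemma vadd0 x : vadd x (vzero d) = x.
Proof. by apply/ffunP => i; rewrite !ffunE addn0. Qed.

Lemma vaddA x y z : vadd (vadd x y) z = vadd x (vadd y z).
Proof. by apply/ffunP => i; rewrite !ffunE addnA. Qed.

Lemma vle_addl x s : vle s (vadd x s).
Proof. by apply/forallP => i; rewrite ffunE leq_addl. Qed.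

Lemma vlt_addr x s : s != vzero d -> vlt x (vadd x s).
Proof.
move=> s_neq0; apply/andP; split; last first.
  by apply/forallP => i; rewrite ffunE leq_addr.
apply: contra_neq s_neq0 => ex; apply/ffunP => i.
have /eqP := congr1 (fun v : vec d => v i) ex.
by rewrite !ffunE -[X in X == _]addn0 eqn_add2l => /eqP <-.
Qed.

End NaturalOrder.

Section FiniteGaps.
Variables (d : nat) (H : {fset vec d}).

Lemma gap_ind (P : vec d -> Prop) :
  (forall x, x \in H -> (forall y, y \in H -> vlt x y -> P y) -> P x) ->
  forall x, x \in H -> P x.
Proof. exact: fset_upward_ind (@vlt_trans d) (@vlt_irr d). Qed.

Lemma le_unique_maximal (F : vec d) :
  unique_maximal H F -> forall x, x \in H -> vle x F.
Proof.
move=> [_ uniqF]; apply: gap_ind => x xH IH.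
have [[y [yH lt_xy]]|no_above] := pselect (exists y, y \in H /\ vlt x y).
  by apply: vle_trans (IH y yH lt_xy); case/andP: lt_xy.
suff -> : x = F by apply: vle_refl.
by apply: uniqF; split=> // h hH; apply/negP => lt_xh; apply: no_above; exists h.
Qed.

End FiniteGaps.

Section PseudoFrobeniusDecomposition.
Variables (d : nat) (S : pred (vec d)) (H : {fset vec d}).
Hypothesis gapsS : GNS_with_gaps S H.

Definition pseudo_frobenius_set : {fset vec d} :=
  [fset P in H | `[< pseudo_frobenius S H P >]].

Lemma in_pseudo_frobenius_set P :
  P \in pseudo_frobenius_set = (P \in H) && `[< pseudo_frobenius S H P >].
Proof. by rewrite !inE. Qed.

Lemma not_pseudo_frobenius_step x :
  ~ pseudo_frobenius S H x -> x \in H ->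
  exists2 s, S s & s != vzero d /\ vadd x s \in H.
Proof.
move=> not_pf xH.
have [//|no_step] := pselect (exists2 s, S s & s != vzero d /\ vadd x s \in H).
case: not_pf; split=> // s Ss s_neq0; apply/negPn/negP => not_S.
by apply: no_step; exists s => //; split=> //; apply/gapsS.2.
Qed.

Lemma pseudo_frobenius_decomposition x :
  x \in H -> exists2 s, S s & vadd x s \in pseudo_frobenius_set.
Proof.
move: x; apply: gap_ind => x xH IH.
have [pf_x|not_pf_x] := pselect (pseudo_frobenius S H x).
  exists (vzero d); first exact: gapsS.1.1.
  by rewrite vadd0 in_pseudo_frobenius_set xH; apply/asboolP.
have [s Ss [s_neq0 xsH]] := not_pseudo_frobenius_step not_pf_x xH.
have [s' Ss' pf] := IH _ xsH (vlt_addr x s_neq0).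
by exists (vadd s s'); [apply: gapsS.1.2 | rewrite -vaddA].
Qed.

End PseudoFrobeniusDecomposition.

Section Box.
Variables (d : nat) (F : vec d).

(* The box {x in N^d | x <= F}, as the image of the finite product of the
   ordinal ranges [0, F_i]; its cardinality is ||F||. *)
Definition box_index : finType := {dffun forall i : 'I_d, 'I_(F i).+1}.
Definition box_point (t : box_index) : vec d := [ffun i => nat_of_ord (t i)].
Definition box : {fset vec d} := [fset box_point t | t : box_index].

Lemma in_box x : (x \in box) = vle x F.
Proof.
apply/imfsetP/forallP => [[t _ ->] i|le_xF].
  by rewrite ffunE -ltnS ltn_ord.
exists (@finfun _ (fun i => 'I_(F i).+1) (fun i => inord (x i))) => //.
by apply/ffunP => i; rewrite !ffunE inordK // ltnS.
Qed.

Lemma card_box : #|` box| = vnorm F.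
Proof.
rewrite card_imfset; last first.
  move=> t t' ett'; apply/ffunP => i; apply: val_inj.
  by have := congr1 (fun v : vec d => v i) ett'; rewrite !ffunE.
rewrite /= -cardT card_dep_ffun /vnorm foldrE big_map big_enum /=.
by apply: eq_bigr => i _; rewrite card_ord.
Qed.

End Box.

Section Counting.
Variables (d : nat) (S : pred (vec d)) (H : {fset vec d}) (F : vec d).
Hypotheses (gapsS : GNS_with_gaps S H) (frobF : unique_maximal H F).

Definition box_elements : {fset vec d} := [fset x in box F | S x].

Lemma gap_in_box x : x \in H -> x \in box F.
Proof. by rewrite in_box; apply: le_unique_maximal. Qed.

Lemma card_box_split : vnorm F = (genus H + #|` box_elements|)%N.
Proof.
have gapsE y : (y \in H) = ~~ S y by apply/idP/idP => /gapsS.2.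
have -> : box_elements = box F `\` H.
  by apply/fsetP => y; rewrite !inE /= gapsE negbK andbC.
have gaps_sub_box : H `<=` box F by apply/fsubsetP => y; apply: gap_in_box.
by rewrite -card_box cardfsDS // subnKC // fsubset_leq_card.
Qed.

(* Main count: g(S) <= t(S) * #|S /\ box|, by the decomposition x = P - s. *)
Lemma genus_le_type_mul : (genus H <= type_of S H * #|` box_elements|)%N.
Proof.
pose vsub (P s : vec d) : vec d := [ffun i => (P i - s i)%N].
apply: leq_trans (card_imfset2_le vsub _ _).
apply/fsubset_leq_card/fsubsetP => x xH.
have [s Ss pf] := pseudo_frobenius_decomposition gapsS xH.
apply/imfset2P; exists (vadd x s) => //; exists s.
  rewrite !inE /= Ss andbT in_box; apply: vle_trans (vle_addl x s) _.
  by apply: (le_unique_maximal frobF); move: pf; rewrite in_pseudo_frobenius_set => /andP[].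
by apply/ffunP => i; rewrite !ffunE addnK.
Qed.

End Counting.

Local Close Scope fset_scope.
Local Open Scope ring_scope.

(* A bound g <= t * n on naturals gives g / n <= t in the rationals
   (with the convention x / 0 = 0). *)
Lemma ratio_le_of_leq (g t n : nat) : (g <= t * n)%N -> g%:R / n%:R <= t%:R :> rat.
Proof.
move=> le_g; have [->|n_gt0] := posnP n; first by rewrite invr0 mulr0 ler0n.
by rewrite ler_pdivrMr ?ltr0n // -natrM ler_nat.
Qed.

Theorem theorem4p2 (d : nat) (S : pred (vec d)) (H : {fset vec d}) (F : vec d) :
  GNS_with_gaps S H -> unique_maximal H F ->
  (genus H)%:R / ((vnorm F)%:R - (genus H)%:R) <= (type_of S H)%:R :> rat.
Proof.
move=> gapsS frobF.
rewrite (card_box_split gapsS frobF) natrD addrC addKr.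
exact/ratio_le_of_leq/genus_le_type_mul.
Qed.
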